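(* For every integer $d \geq 2$, $\mathsf {Brac}_{d,1}=\mathsf {Brac}_d$.
   Context: $\Delta_d=\{\alpha\in\mathbb R^d:\alpha_i\ge0,\ \sum_i\alpha_i=1\}$. The bracelet condition set is $\mathsf{Brac}_d=\{(\alpha,\beta)\in\Delta_d^2:\ \forall i\in[d],\ \sqrt{\alpha_i\beta_i}\le\sum_{j\ne i}\sqrt{\alpha_j\beta_j}\}$. For $s\ge1$, the generalized bracelet condition set $\mathsf{Brac}_{d,s}$ is the set of $(\alpha,\beta)\in\Delta_d^2$ for which there exist $A_1,\dots,A_d,B_1,\dots,B_d\in M_s(\mathbb C)$ with $\sum_i A_iA_i^*=\sum_iB_iB_i^*=I_s$, $\sum_iA_iB_i^*=0$, and $\tfrac1s\|A_i\|_F^2=\alpha_i$, $\tfrac1s\|B_i\|_F^2=\beta_i$ for all $i\in[d]$, where $\|X\|_F=\operatorname{Tr}(XX^* )^{1/2}$. *)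

From HB Require Import structures.
From mathcomp Require Import all_boot all_order all_algebra.
From mathcomp Require Import reals.
From mathcomp Require Import complex.
Set Implicit Arguments. Unset Strict Implicit. Unset Printing Implicit Defensive.
Import Order.TTheory GRing.Theory Num.Theory.
Local Open Scope ring_scope.

Definition simplex (R : realType) (d : nat) (a : 'I_d -> R) : Prop :=
  (forall i, 0 <= a i) /\ \sum_(i < d) a i = 1.

Definition Brac (R : realType) (d : nat) (a b : 'I_d -> R) : Prop :=
  simplex a /\ simplex b /\
  forall i : 'I_d,
    Num.sqrt (a i * b i) <= \sum_(j < d | j != i) Num.sqrt (a j * b j).

Definition adjmx (R : realType) (m n : nat) (X : 'M[complex R]_(m, n)) : 'M[complex R]_(n, m) :=
  map_mx Num.conj (X^T).

Definition frob2 (R : realType) (s : nat) (X : 'M[complex R]_s) : complex R :=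
  \tr (X *m adjmx X).

Definition Brac_gen (R : realType) (d s : nat) (a b : 'I_d -> R) : Prop :=
  simplex a /\ simplex b /\
  exists A B : 'I_d -> 'M[complex R]_s,
    \sum_(i < d) A i *m adjmx (A i) = 1%:M /\
    \sum_(i < d) B i *m adjmx (B i) = 1%:M /\
    \sum_(i < d) A i *m adjmx (B i) = 0 /\
    (forall i, frob2 (A i) / s%:R = (a i)%:C%C) /\
    (forall i, frob2 (B i) / s%:R = (b i)%:C%C).

(* For s = 1 the matrices are complex scalars alpha_i, beta_i with |alpha_i|^2 = a_i and
   |beta_i|^2 = b_i; the two unitality conditions then say exactly that a and b lie in the
   simplex, and the remaining one is sum_i alpha_i conj(beta_i) = 0, i.e. the numbers
   alpha_i conj(beta_i), of moduli sqrt(a_i b_i), form a closed polygon in C.  Such a polygon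
   exists iff no side is longer than all the others together.  Necessity is the triangle
   inequality.  For sufficiency, cut the sides at the first index k where the running sum
   reaches half of the total: the sides before k, side k and the sides after k have total
   lengths p, q, t satisfying the triangle inequalities, so a triangle with these side
   lengths closes up, and each group of sides is laid out along one edge of it. *)

From HB Require Import structures.
From mathcomp Require Import all_boot all_order all_algebra.
From mathcomp Require Import reals complex.
From mathcomp Require Import ring lra.
Import Order.TTheory GRing.Theory Num.Theory.
Local Open Scope ring_scope.

Lemma ler_norm_sum_others (K : numDomainType) (V : normedZmodType K) (I : finType)
    (z : I -> V) (i : I) :
  \sum_j z j = 0 -> `|z i| <= \sum_(j | j != i) `|z j|.
Proof.
rewrite (bigD1 i) //= => /eqP; rewrite addr_eq0 => /eqP ->.
by rewrite normrN ler_norm_sum.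
Qed.

Lemma sum_ord_split_at {V : nmodType} {n : nat} (F : 'I_n -> V) (k : 'I_n) :
  \sum_i F i = \sum_(i : 'I_n | (i < k)%N) F i + F k + \sum_(i : 'I_n | (k < i)%N) F i.
Proof.
rewrite (bigID (fun i : 'I_n => (i < k)%N)) /= -addrA; congr (_ + _).
rewrite (bigD1 k) ?ltnn //=; congr (_ + _); apply: eq_bigl => i.
by rewrite -val_eqE /= -leqNgt ltn_neqAle eq_sym andbC.
Qed.

Lemma normr_polar {F : numFieldType} (z : F) : exists2 u : F, `|u| = 1 & z = `|z| * u.
Proof.
have [-> | z0] := eqVneq z 0; first by exists 1; rewrite ?normr1 ?normr0 ?mul0r.
have nz0 : `|z| != 0 by rewrite normr_eq0.
exists (z / `|z|); first by rewrite normf_div normr_id divff.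
by rewrite mulrC divfK.
Qed.

Section Polygon.
Variable R : realType.

Lemma norm_Complex (x y m : R) : 0 <= m -> x ^+ 2 + y ^+ 2 = m ^+ 2 -> `|(x +i* y)%C| = m%:C%C.
Proof. by move=> m0 h; rewrite normc_def /= h sqrtr_sqr ger0_norm. Qed.

Lemma triangle_closure (p q t : R) : 0 <= p -> 0 <= q -> 0 <= t ->
    p <= q + t -> q <= p + t -> t <= p + q ->
  exists u v w : complex R, [/\ `|u| = 1, `|v| = 1, `|w| = 1
    & p%:C%C * u + q%:C%C * v + t%:C%C * w = 0].
Proof.
move=> p0 q0 t0 hp hq ht.
have [pE | pn0] := eqVneq p 0.
  have qt : q = t by rewrite pE in hq ht; lra.
  exists 1, 1, (-1); rewrite normrN normr1 pE qt; split=> //.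
  by rewrite !mulr1 mulrN1 addrK.
have p_gt0 : 0 < p by rewrite lt_def pn0.
(* Chosen so that [|p + (x +i* y)| = t] once [|x +i* y| = q] (law of cosines). *)
pose x := (t ^+ 2 - p ^+ 2 - q ^+ 2) / (2 * p).
have x2p : x * (2 * p) = t ^+ 2 - p ^+ 2 - q ^+ 2 by rewrite mulfVK // mulf_neq0 // pnatr_eq0.
have x_le : x ^+ 2 <= q ^+ 2.
  have : (x * (2 * p)) ^+ 2 <= (q * (2 * p)) ^+ 2.
    rewrite x2p -subr_ge0.
    have -> : (q * (2 * p)) ^+ 2 - (t ^+ 2 - p ^+ 2 - q ^+ 2) ^+ 2
      = ((p + q - t) * (p + q + t)) * ((t - p + q) * (t + p - q)) by ring.
    by apply: mulr_ge0; apply: mulr_ge0; lra.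
  have h2p : 0 < (2 * p) ^+ 2 by apply/exprn_gt0/mulr_gt0.
  by rewrite [(x * _) ^+ 2]exprMn [(q * _) ^+ 2]exprMn ler_pM2r.
pose y := Num.sqrt (q ^+ 2 - x ^+ 2).
have y2 : y ^+ 2 = q ^+ 2 - x ^+ 2 by rewrite sqr_sqrtr // subr_ge0.
have [v nv zE] := normr_polar (x +i* y)%C.
have [w nw z'E] := normr_polar (- (p + x) +i* (- y))%C.
rewrite (@norm_Complex _ _ q) // in zE; last by rewrite y2 addrC subrK.
rewrite (@norm_Complex _ _ t) // in z'E; last first.
  rewrite !sqrrN y2; nra.
exists 1, v, w; rewrite normr1 mulr1 -zE -z'E; split=> //.
by apply/eqP; rewrite eq_complex /= add0r !subrr !eqxx.
Qed.

Lemma exists_balanced_index {d : nat} {r : 'I_d.+1 -> R} : (forall i, 0 <= r i) ->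
  exists k : 'I_d.+1,
    2 * \sum_(i : 'I_d.+1 | (i < k)%N) r i <= \sum_i r i
    <= 2 * (\sum_(i : 'I_d.+1 | (i < k)%N) r i + r k).
Proof.
move=> r_ge0; set S := \sum_i r i.
have S_ge0 : 0 <= S by apply: sumr_ge0.
pose pre n := \sum_(i : 'I_d.+1 | (i <= n)%N) r i.
have exP : exists n, (n < d.+1)%N && (S <= 2 * pre n).
  exists d; have -> : pre d = S by apply: eq_bigl => i; exact: leq_ord.
  by rewrite ltnSn /=; lra.
case: (ex_minnP exP) => k /andP[k_lt S_le] k_min.
pose K := Ordinal k_lt.
have preE : pre k = \sum_(i : 'I_d.+1 | (i < K)%N) r i + r K.
  rewrite /pre (bigD1 K) //= addrC; congr (_ + _); apply: eq_bigl => i.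
  by rewrite -val_eqE /= ltn_neqAle andbC.
exists K; rewrite -preE S_le andbT.
case: k k_lt S_le k_min @K preE => [|k] k_lt S_le k_min K _.
  by rewrite big_pred0 // mulr0.
have := k_min k; rewrite ltnn (ltn_trans (ltnSn k) k_lt) /=.
by case: (leP S (2 * pre k)) => [_ /(_ isT) // | /ltW].
Qed.

Lemma polygon_closure {d : nat} {r : 'I_d -> R} : (forall i, 0 <= r i) ->
    (forall i, r i <= \sum_(j | j != i) r j) ->
  exists2 w : 'I_d -> complex R, forall i, `|w i| = 1 & \sum_i (r i)%:C%C * w i = 0.
Proof.
case: d r => [|d] r r_ge0 r_le; first by exists (fun=> 1) => [[] //|]; rewrite big_ord0.
have [k /andP[p_le t_le]] := exists_balanced_index r_ge0.
set p := \sum_(i : 'I_d.+1 | (i < k)%N) r i in p_le t_le *.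
set t := \sum_(i : 'I_d.+1 | (k < i)%N) r i.
have S_split : \sum_i r i = p + r k + t := sum_ord_split_at r k.
have S_k : \sum_i r i = r k + \sum_(j | j != k) r j := bigD1 k isT.
have q_le := r_le k.
have p_ge0 : 0 <= p by apply: sumr_ge0.
have t_ge0 : 0 <= t by apply: sumr_ge0.
have [u [v [w [nu nv nw closed]]]] : exists u v w : complex R,
    [/\ `|u| = 1, `|v| = 1, `|w| = 1 & p%:C%C * u + (r k)%:C%C * v + t%:C%C * w = 0].
  by apply: triangle_closure => //; lra.
exists (fun i => if (i < k)%N then u else if i == k then v else w).
  by move=> i; case: ifP => _ //; case: ifP.
rewrite (sum_ord_split_at _ k) ltnn eqxx -[RHS]closed /p /t !rmorph_sum !big_distrl /=.
congr (_ + _ + _); apply: eq_bigr => i; first by move->.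
by move=> k_lt; rewrite ltnNge ltnW //=; case: eqP k_lt => // ->; rewrite ltnn.
Qed.
End Polygon.

Section ScalarBracelet.
Variables (R : realType) (d : nat).
Implicit Types (a b : 'I_d -> R) (X : 'M[complex R]_1).

Definition orthogonal_lift a b := exists alpha beta : 'I_d -> complex R,
  [/\ forall i, `|alpha i| ^+ 2 = (a i)%:C%C, forall i, `|beta i| ^+ 2 = (b i)%:C%C
    & \sum_i alpha i * (beta i)^* = 0].

Lemma norm_eq_sqrt {z : complex R} {c : R} : `|z| ^+ 2 = c%:C%C -> `|z| = (Num.sqrt c)%:C%C.
Proof.
move=> zc; have c_ge0 : 0 <= c by rewrite -ler0c -zc exprn_ge0.
apply/eqP; rewrite -(@eqrXn2 _ 2) // ?ler0c ?sqrtr_ge0 //.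
by rewrite zc -rmorphXn /= sqr_sqrtr.
Qed.

Lemma mx11_scalar_entry (c : complex R) : (c%:M : 'M_1) 0 0 = c.
Proof. by rewrite mxE eqxx mulr1n. Qed.

Lemma sum_mulmx_adj1 (A B : 'I_d -> 'M[complex R]_1) :
  \sum_i A i *m adjmx (B i) = (\sum_i A i 0 0 * (B i 0 0)^*)%:M.
Proof.
apply/matrixP=> i j; rewrite !ord1 summxE mx11_scalar_entry.
by apply: eq_bigr => k _; rewrite mxE big_ord1 !mxE.
Qed.

Lemma frob2_mx1 X : frob2 X = `|X 0 0| ^+ 2.
Proof. by rewrite normCK /frob2 /mxtrace big_ord1 mxE big_ord1 !mxE. Qed.

Lemma Brac_gen1E a b :
  Brac_gen 1 a b <-> [/\ simplex a, simplex b & orthogonal_lift a b].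
Proof.
split=> [[sa [sb [A [B [_ [_ [AB0 [nA nB]]]]]]]] | [sa sb [al [be [nal nbe albe0]]]]].
  split=> //; exists (fun i => A i 0 0), (fun i => B i 0 0); split=> [i|i|].
  - by rewrite -frob2_mx1 -nA divr1.
  - by rewrite -frob2_mx1 -nB divr1.
  - by move: AB0; rewrite sum_mulmx_adj1 => /matrixP/(_ 0 0); rewrite mx11_scalar_entry mxE.
have sum_norm2 (c : 'I_d -> R) (z : 'I_d -> complex R) : simplex c ->
    (forall i, `|z i| ^+ 2 = (c i)%:C%C) ->
    \sum_i (z i)%:M *m adjmx ((z i)%:M : 'M_1) = 1%:M.
  move=> [_ c1] zc; rewrite sum_mulmx_adj1; congr (_%:M).
  under eq_bigr => i _ do rewrite mx11_scalar_entry -normCK zc.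
  by rewrite -rmorph_sum c1.
do 2!split=> //; exists (fun i => (al i)%:M), (fun i => (be i)%:M).
split; first exact: sum_norm2 sa nal.
split; first exact: sum_norm2 sb nbe.
split; last split=> i.
- rewrite sum_mulmx_adj1; under eq_bigr => i _ do rewrite !mx11_scalar_entry.
  by rewrite albe0 -scalemx1 scale0r.
- by rewrite divr1 frob2_mx1 mx11_scalar_entry.
- by rewrite divr1 frob2_mx1 mx11_scalar_entry.
Qed.

Lemma Brac_of_orthogonal_lift a b :
  simplex a -> simplex b -> orthogonal_lift a b -> Brac a b.
Proof.
move=> sa sb [al [be [nal nbe albe0]]]; do 2!split=> //; move=> i.
have norm_z j : `|al j * (be j)^*| = (Num.sqrt (a j * b j))%:C%C.
  rewrite normrM norm_conjC (norm_eq_sqrt (nal j)) (norm_eq_sqrt (nbe j)) -rmorphM.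
  by rewrite -sqrtrM //; case: sa.
rewrite -lecR rmorph_sum /= -norm_z; under eq_bigr => j _ do rewrite -norm_z.
exact: ler_norm_sum_others.
Qed.

Lemma orthogonal_lift_of_Brac a b : Brac a b -> orthogonal_lift a b.
Proof.
case=> [[a_ge0 _] [[b_ge0 _] brac]].
have [w nw closed] := polygon_closure _ (fun i => sqrtr_ge0 (a i * b i)) brac.
have norm_sqrt (c : R) : 0 <= c -> `|(Num.sqrt c)%:C%C| ^+ 2 = c%:C%C.
  by move=> c_ge0; rewrite ger0_norm ?ler0c ?sqrtr_ge0 // -rmorphXn sqr_sqrtr.
exists (fun i => (Num.sqrt (a i))%:C%C * w i), (fun i => (Num.sqrt (b i))%:C%C).
split=> [i|i|]; first by rewrite normrM nw mulr1 norm_sqrt.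
  exact: norm_sqrt.
rewrite -[RHS]closed; apply: eq_bigr => i _.
by rewrite geC0_conj ?ler0c ?sqrtr_ge0 // mulrAC -rmorphM -sqrtrM.
Qed.

End ScalarBracelet.

Theorem proposition3p4 (R : realType) (d : nat) : (2 <= d)%N ->
  forall a b : 'I_d -> R, Brac_gen 1 a b <-> Brac a b.
Proof.
move=> _ a b; rewrite Brac_gen1E; split=> [[sa sb lift] | brac].
  exact: Brac_of_orthogonal_lift lift.
by have [sa [sb _]] := brac; split=> //; apply: orthogonal_lift_of_Brac.
Qed.
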